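(* Let $(\omega_n)_{n\ge1}$ be nonzero complex numbers with $\liminf_{n\to\infty}(\operatorname{Re}\omega_{n+1}-\operatorname{Re}\omega_n)=\gamma>0$ and $(\operatorname{Im}\omega_n)$ bounded, and let $(c_n)$ be complex numbers with $|c_n|\le M/|\omega_n|$ for all $n$, for some $M>0$. Then for every $\varepsilon\in(0,1)$ and every $T>\frac{2\pi}{\gamma\sqrt{1-\varepsilon}}$ there exists $n_0=n_0(\varepsilon)\in\mathbb{N}$, independent of $T$ and of $(C_n)$, such that for every complex sequence $(C_n)$ with $\sum|C_n|^2<\infty$, $$\int_0^\infty k(t)\Big(\Big|\sum_{n=n_0}^\infty C_ne^{i\omega_nt}+\overline{C_n}e^{-i\overline{\omega_n}t}\Big|^2-2\Big|\sum_{n=n_0}^\infty c_nC_ne^{i\omega_nt}+\overline{c_nC_n}e^{-i\overline{\omega_n}t}\Big|^2\Big)dt$$ $$\ge 2\pi T\sum_{n=n_0}^\infty\Big(\frac{1-\varepsilon}{\pi^2+4T^2(\operatorname{Im}\omega_n)^2}-\frac{4(1+\varepsilon)}{T^2\gamma^2}\Big)(1+e^{-2\operatorname{Im}\omega_nT})|C_n|^2 .$$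
   Context: For $T>0$, $k(t):=\sin(\pi t/T)$ for $t\in[0,T]$ and $k(t):=0$ otherwise. *)

From Stdlib Require Export Reals.
Open Scope R_scope.

Record Cx : Type := mkC { Re : R; Im : R }.

Definition C0 : Cx := mkC 0 0.
Definition Ci : Cx := mkC 0 1.
Definition Cadd (z w : Cx) : Cx := mkC (Re z + Re w) (Im z + Im w).
Definition Cmul (z w : Cx) : Cx :=
  mkC (Re z * Re w - Im z * Im w) (Re z * Im w + Im z * Re w).
Definition Copp (z : Cx) : Cx := mkC (- Re z) (- Im z).
Definition Cconj (z : Cx) : Cx := mkC (Re z) (- Im z).
Definition RtoC (r : R) : Cx := mkC r 0.
Definition Cexp (z : Cx) : Cx := mkC (exp (Re z) * cos (Im z)) (exp (Re z) * sin (Im z)).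
Definition Cmod2 (z : Cx) : R := Re z * Re z + Im z * Im z.
Definition Cmod (z : Cx) : R := sqrt (Cmod2 z).

Definition kern (T t : R) : R :=
  match Rle_dec 0 t with
  | left _ => match Rle_dec t T with
              | left _ => sin (PI * t / T)
              | right _ => 0
              end
  | right _ => 0
  end.

Definition is_liminf (u : nat -> R) (g : R) : Prop :=
  forall eps, 0 < eps ->
    (exists N, forall n, (n >= N)%nat -> g - eps < u n) /\
    (forall N, exists n, (n >= N)%nat /\ u n < g + eps).

Definition wterm (w Cn : Cx) (t : R) : Cx :=
  Cadd (Cmul Cn (Cexp (Cmul Ci (Cmul w (RtoC t)))))
       (Cmul (Cconj Cn) (Cexp (Cmul (Copp Ci) (Cmul (Cconj w) (RtoC t))))).

Fixpoint Csum (f : nat -> Cx) (n0 m : nat) : Cx :=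
  match m with
  | O => C0
  | S m' => Cadd (Csum f n0 m') (f (n0 + m')%nat)
  end.

Definition IsRInt (f : R -> R) (a b v : R) : Prop :=
  exists pr : Riemann_integrable f a b, RiemannInt pr = v.

Definition integrand (w c Cc : nat -> Cx) (T : R) (n0 m : nat) (t : R) : R :=
  kern T t *
  (Cmod2 (Csum (fun n => wterm (w n) (Cc n) t) n0 m)
   - 2 * Cmod2 (Csum (fun n => wterm (w n) (Cmul (c n) (Cc n)) t) n0 m)).

Definition rhs_coef (w : nat -> Cx) (T g eps : R) (n : nat) : R :=
  ((1 - eps) / (PI ^ 2 + 4 * T ^ 2 * (Im (w n)) ^ 2)
   - 4 * (1 + eps) / (T ^ 2 * g ^ 2))
  * (1 + exp (- 2 * Im (w n) * T)).

(* With [nu = PI / T] the kernel is [sin (nu t)] on [[0, T]], and each summand is the real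
   damped wave [2 e^(-b t) (x cos (a t) - y sin (a t))] (for w = a + i b, C = x + i y).
   Expanding the square turns the integral into a quadratic form in the [C n] whose entries are
   explicit integrals of [sin (nu t) e^(-beta t) cos/sin (theta t)], [theta = a j -/+ a l].
   The diagonal entries give [2 PI T] times the first term of the right-hand side; an
   off-diagonal entry is at most [nu / (theta^2 - nu^2)] times the diagonal sizes.  Since the
   real parts eventually grow by at least [g (1 - eps/4) >= 2 nu] per step, the off-diagonal
   row sums are at most [4 / (g (1 - eps/4))^2 + O(1 / Re (w n0))] (telescoping), and a Schur
   test bounds the off-diagonal part by the second term plus a small error.  The form with
   coefficients [c n C n] is at most [M^2 / Re (w n0)^2] times as large, so taking [Re (w n0)]
   large puts all errors inside the [eps]-margin.  The truncated integrals converge because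
   the tails of [sum |C n|^2] are small. *)

From Coquelicot Require Import Coquelicot.
From Stdlib Require Import Reals Lra Lia Psatz.
Open Scope R_scope.

Fixpoint rsum (f : nat -> R) (p q : nat) : R :=
  match q with O => 0 | S q' => rsum f p q' + f (p + q')%nat end.

Lemma rsum_ext f g p q :
  (forall i, (i < q)%nat -> f (p + i)%nat = g (p + i)%nat) -> rsum f p q = rsum g p q.
Proof.
  induction q as [|q IH]; intros H; simpl; [reflexivity|].
  rewrite IH, H; [reflexivity|lia|intros; apply H; lia].
Qed.

Lemma rsum_plus f g p q : rsum (fun i => f i + g i) p q = rsum f p q + rsum g p q.
Proof. induction q as [|q IH]; simpl; [ring|rewrite IH; ring]. Qed.

Lemma rsum_minus f g p q : rsum (fun i => f i - g i) p q = rsum f p q - rsum g p q.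
Proof. induction q as [|q IH]; simpl; [ring|rewrite IH; ring]. Qed.

Lemma rsum_scal c f p q : rsum (fun i => c * f i) p q = c * rsum f p q.
Proof. induction q as [|q IH]; simpl; [ring|rewrite IH; ring]. Qed.

Lemma rsum_const0 p q : rsum (fun _ => 0) p q = 0.
Proof. induction q as [|q IH]; simpl; [reflexivity|rewrite IH; ring]. Qed.

Lemma rsum_le f g p q :
  (forall i, (i < q)%nat -> f (p + i)%nat <= g (p + i)%nat) -> rsum f p q <= rsum g p q.
Proof.
  induction q as [|q IH]; intros H; simpl; [lra|].
  assert (rsum f p q <= rsum g p q) by (apply IH; intros; apply H; lia).
  specialize (H q (Nat.lt_succ_diag_r q)); lra.
Qed.

Lemma rsum_nonneg f p q : (forall i, (i < q)%nat -> 0 <= f (p + i)%nat) -> 0 <= rsum f p q.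
Proof. intros H; rewrite <- (rsum_const0 p q); apply rsum_le, H. Qed.

Lemma rsum_split f p k r : rsum f p (k + r) = rsum f p k + rsum f (p + k) r.
Proof.
  induction r as [|r IH]; simpl; [rewrite Nat.add_0_r; ring|].
  rewrite Nat.add_succ_r; simpl; rewrite IH, Nat.add_assoc; ring.
Qed.

Lemma rsum_cons f p r : rsum f p (S r) = f p + rsum f (S p) r.
Proof.
  rewrite <- Nat.add_1_l, rsum_split, Nat.add_1_r; simpl; rewrite Nat.add_0_r; ring.
Qed.

Lemma rsum_abs f p q : Rabs (rsum f p q) <= rsum (fun i => Rabs (f i)) p q.
Proof.
  induction q as [|q IH]; simpl; [rewrite Rabs_R0; lra|].
  eapply Rle_trans; [apply Rabs_triang|lra].
Qed.

Lemma rsum_swap (f : nat -> nat -> R) p q p' q' :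
  rsum (fun j => rsum (f j) p' q') p q = rsum (fun l => rsum (fun j => f j l) p q) p' q'.
Proof.
  induction q as [|q IH]; simpl.
  - symmetry; apply rsum_const0.
  - rewrite IH, <- rsum_plus; reflexivity.
Qed.

Lemma rsum_sqr f p q : (rsum f p q)^2 = rsum (fun j => rsum (fun l => f j * f l) p q) p q.
Proof.
  rewrite <- Rsqr_pow2; unfold Rsqr.
  rewrite <- rsum_scal; apply rsum_ext; intros.
  rewrite Rmult_comm, <- rsum_scal; reflexivity.
Qed.

Lemma rsum_delta (f : nat -> R) j p q : (p <= j < p + q)%nat ->
  rsum (fun l => if Nat.eq_dec j l then f l else 0) p q = f j.
Proof.
  intros Hj.
  replace q with ((j - p) + S (p + q - S j))%nat by lia.
  rewrite rsum_split, rsum_cons, Nat.add_sub_assoc, Nat.add_comm, Nat.add_sub by lia.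
  rewrite (rsum_ext _ (fun _ => 0)), (rsum_ext _ (fun _ => 0) (S j)), !rsum_const0.
  - destruct (Nat.eq_dec j j); [ring|congruence].
  - intros; destruct (Nat.eq_dec j (S j + i)); [lia|reflexivity].
  - intros; destruct (Nat.eq_dec j (p + i)); [lia|reflexivity].
Qed.

Lemma rsum_telescope f (F : nat -> R) p q :
  (forall i, (i < q)%nat -> f (p + i)%nat <= F (S i) - F i) -> rsum f p q <= F q - F O.
Proof.
  induction q as [|q IH]; intros H; simpl; [lra|].
  assert (rsum f p q <= F q - F O) by (apply IH; intros; apply H; lia).
  specialize (H q (Nat.lt_succ_diag_r q)); lra.
Qed.

Lemma sum_f_R0_rsum (h : nat -> R) p n : sum_f_R0 (fun j => h (p + j)%nat) n = rsum h p (S n).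
Proof.
  induction n as [|n IH]; simpl; [rewrite Nat.add_0_r; ring|].
  simpl in IH; rewrite IH; reflexivity.
Qed.

Lemma is_RInt_rsum (f : nat -> R -> R) (v : nat -> R) a b p q :
  (forall i, (i < q)%nat -> is_RInt (f (p + i)%nat) a b (v (p + i)%nat)) ->
  is_RInt (fun t => rsum (fun i => f i t) p q) a b (rsum v p q).
Proof.
  induction q as [|q IH]; intros H; simpl.
  - pose proof (is_RInt_const (V := R_NormedModule) a b 0) as H0.
    unfold scal in H0; simpl in H0; unfold mult in H0; simpl in H0.
    rewrite Rmult_0_r in H0; exact H0.
  - apply (is_RInt_plus (V := R_NormedModule)); [apply IH; intros; apply H|apply H]; lia.
Qed.

Definition damped nu beta theta p q (t : R) :=
  sin (nu*t) * exp (-(beta*t)) * (p * cos (theta*t) + q * sin (theta*t)).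

(* [den_re + i den_im = nu^2 + (beta - i theta)^2]; a primitive of [damped] is again of
   the form [e^(-beta t) (...)], with coefficients [(p - i q) / (den_re + i den_im)]. *)
Definition den_re nu beta theta := nu*nu + beta*beta - theta*theta.
Definition den_im (beta theta : R) := -(2*beta*theta).
Definition den_norm2 nu beta theta := den_re nu beta theta ^ 2 + den_im beta theta ^ 2.
Definition prim_re nu beta theta p q :=
  (p * den_re nu beta theta - q * den_im beta theta) / den_norm2 nu beta theta.
Definition prim_im nu beta theta p q :=
  -(p * den_im beta theta + q * den_re nu beta theta) / den_norm2 nu beta theta.

Definition damped_primitive nu beta theta u v (t : R) := exp (-(beta*t)) *
  ((u * cos (theta*t) - v * sin (theta*t)) * (-(beta * sin (nu*t)) - nu * cos (nu*t))
   - (u * sin (theta*t) + v * cos (theta*t)) * (theta * sin (nu*t))).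

Definition damped_integral T nu beta theta p q :=
  let u := prim_re nu beta theta p q in let v := prim_im nu beta theta p q in
  nu * (u + exp (-(beta*T)) * (u * cos (theta*T) - v * sin (theta*T))).

Lemma damped_primitive_derive nu beta theta u v t :
  is_derive (damped_primitive nu beta theta u v) t
    (damped nu beta theta (u * den_re nu beta theta - v * den_im beta theta)
                          (-(u * den_im beta theta + v * den_re nu beta theta)) t).
Proof. unfold damped_primitive, damped, den_re, den_im; auto_derive; [exact I|ring]. Qed.

Lemma damped_continuous nu beta theta p q t : continuous (damped nu beta theta p q) t.
Proof.
  apply (ex_derive_continuous (K := R_AbsRing) (V := R_NormedModule)).
  unfold damped; auto_derive; exact I.
Qed.

Lemma is_RInt_damped T nu beta theta p q : nu * T = PI -> 0 < den_norm2 nu beta theta ->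
  is_RInt (damped nu beta theta p q) 0 T (damped_integral T nu beta theta p q).
Proof.
  intros HnuT HN.
  set (u := prim_re nu beta theta p q); set (v := prim_im nu beta theta p q).
  assert (Ep : u * den_re nu beta theta - v * den_im beta theta = p)
    by (unfold u, v, prim_re, prim_im, den_norm2 in *; field; lra).
  assert (Eq : -(u * den_im beta theta + v * den_re nu beta theta) = q)
    by (unfold u, v, prim_re, prim_im, den_norm2 in *; field; lra).
  pose proof (is_RInt_derive (damped_primitive nu beta theta u v) _ 0 T
    (fun t _ => damped_primitive_derive nu beta theta u v t)
    (fun t _ => damped_continuous _ _ _ _ _ t)) as H.
  rewrite Ep, Eq in H.
  replace (damped_integral T nu beta theta p q)
    with (minus (damped_primitive nu beta theta u v T) (damped_primitive nu beta theta u v 0));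
    [exact H|].
  unfold minus, plus, opp; simpl; unfold damped_primitive, damped_integral; fold u v.
  rewrite HnuT, !Rmult_0_r, Ropp_0, exp_0, sin_0, cos_0, sin_PI, cos_PI; ring.
Qed.

Lemma den_norm2_ge nu beta theta : (theta*theta - nu*nu)^2 <= den_norm2 nu beta theta.
Proof. unfold den_norm2, den_re, den_im; nra. Qed.

Lemma den_norm2_pos nu beta theta : theta*theta <> nu*nu -> 0 < den_norm2 nu beta theta.
Proof.
  intros H; eapply Rlt_le_trans; [|apply den_norm2_ge].
  apply pow2_gt_0; lra.
Qed.

Lemma prim_sqnorm nu beta theta p q : 0 < den_norm2 nu beta theta ->
  prim_re nu beta theta p q ^ 2 + prim_im nu beta theta p q ^ 2
  = (p*p + q*q) / den_norm2 nu beta theta.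
Proof. unfold prim_re, prim_im, den_norm2; intros; field; lra. Qed.

Lemma damped_integral_bound T nu beta theta p q : 0 < nu -> nu*nu < theta*theta ->
  Rabs (damped_integral T nu beta theta p q)
  <= nu * sqrt (p*p + q*q) * (1 + exp (-(beta*T))) / (theta*theta - nu*nu).
Proof.
  intros Hnu Hth.
  set (D := theta*theta - nu*nu); set (e := exp (-(beta*T))).
  set (c := cos (theta*T)); set (s := sin (theta*T)).
  set (u := prim_re nu beta theta p q); set (v := prim_im nu beta theta p q).
  assert (He : 0 < e) by apply exp_pos.
  assert (Hcs : c*c + s*s = 1) by (unfold c, s; rewrite Rplus_comm; apply sin2_cos2).
  assert (Hc : c <= 1) by apply COS_bound.
  assert (HN : D^2 <= den_norm2 nu beta theta) by apply den_norm2_ge.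
  assert (HD : 0 < D) by (unfold D; lra).
  assert (HD2 : 0 < D^2) by (apply pow2_gt_0; lra).
  assert (Huv : u^2 + v^2 <= (p*p + q*q) / D^2).
  { unfold u, v; rewrite prim_sqnorm by lra.
    apply Rmult_le_compat_l; [nra|apply Rinv_le_contravar; lra]. }
  assert (Hpq : sqrt (p*p + q*q) ^ 2 = p*p + q*q) by (apply pow2_sqrt; nra).
  assert (CS : (u * (1 + e*c) - v * (e*s))^2 <= (u^2 + v^2) * (1 + e)^2).
  { assert (Hcs' : (1 + e*c)^2 + (e*s)^2 <= (1 + e)^2) by nra.
    assert ((u * (1 + e*c) - v * (e*s))^2 <= (u^2 + v^2) * ((1 + e*c)^2 + (e*s)^2))
      by (pose proof (pow2_ge_0 (u * (e*s) + v * (1 + e*c))); nra).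
    pose proof (pow2_ge_0 u); pose proof (pow2_ge_0 v); nra. }
  change (Rabs (nu * (u + e * (u*c - v*s))) <= nu * sqrt (p*p + q*q) * (1 + e) / D).
  replace (u + e * (u*c - v*s)) with (u * (1 + e*c) - v * (e*s)) by ring.
  assert (0 <= sqrt (p*p + q*q)) by apply sqrt_pos.
  assert (0 < nu * (1 + e)) by nra.
  rewrite <- (Rabs_pos_eq (nu * sqrt (p*p + q*q) * (1 + e) / D))
    by (apply Rmult_le_pos; [nra|left; apply Rinv_0_lt_compat; lra]).
  apply Rsqr_le_abs_0; rewrite !Rsqr_pow2; rewrite <- Hpq in Huv.
  replace ((nu * sqrt (p*p + q*q) * (1 + e) / D)^2)
    with (nu^2 * (sqrt (p*p + q*q) ^ 2 / D^2 * (1 + e)^2)) by (field; lra).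
  rewrite Rpow_mult_distr; apply Rmult_le_compat_l; [nra|].
  apply (Rle_trans _ _ _ CS), Rmult_le_compat_r; [nra|exact Huv].
Qed.

Lemma damped_integral_diag T nu beta p q : 0 < nu*nu + beta*beta ->
  damped_integral T nu beta 0 p q = nu * p * (1 + exp (-(beta*T))) / (nu*nu + beta*beta).
Proof.
  intros H; unfold damped_integral, prim_re, prim_im, den_norm2, den_re, den_im.
  replace (0 * T) with 0 by ring; rewrite cos_0, sin_0; field; repeat split; nra.
Qed.

Section Waves.
Variables (a b x y : nat -> R) (nu T : R).

Definition wave j t := 2 * exp (-(b j * t)) * (x j * cos (a j * t) - y j * sin (a j * t)).

Definition cos_diff j l := x j * x l + y j * y l.
Definition sin_diff j l := x j * y l - y j * x l.
Definition cos_sum j l := x j * x l - y j * y l.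
Definition sin_sum j l := -(x j * y l + y j * x l).

Definition wave_pair_integral j l :=
  2 * damped_integral T nu (b j + b l) (a j - a l) (cos_diff j l) (sin_diff j l)
  + 2 * damped_integral T nu (b j + b l) (a j + a l) (cos_sum j l) (sin_sum j l).

Lemma wave_product j l t : sin (nu*t) * (wave j t * wave l t) =
  2 * damped nu (b j + b l) (a j - a l) (cos_diff j l) (sin_diff j l) t
  + 2 * damped nu (b j + b l) (a j + a l) (cos_sum j l) (sin_sum j l) t.
Proof.
  unfold wave, damped, cos_diff, sin_diff, cos_sum, sin_sum.
  replace ((a j - a l) * t) with (a j * t - a l * t) by ring.
  replace ((a j + a l) * t) with (a j * t + a l * t) by ring.
  replace (-((b j + b l) * t)) with (-(b j * t) + -(b l * t)) by ring.
  rewrite cos_minus, sin_minus, cos_plus, sin_plus, exp_plus; ring.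
Qed.

Lemma is_RInt_wave_product j l : nu * T = PI ->
  (a j - a l) * (a j - a l) <> nu*nu -> (a j + a l) * (a j + a l) <> nu*nu ->
  is_RInt (fun t => sin (nu*t) * (wave j t * wave l t)) 0 T (wave_pair_integral j l).
Proof.
  intros HnuT Hd Hs.
  apply (is_RInt_ext (V := R_NormedModule)) with (f := fun t =>
    2 * damped nu (b j + b l) (a j - a l) (cos_diff j l) (sin_diff j l) t
    + 2 * damped nu (b j + b l) (a j + a l) (cos_sum j l) (sin_sum j l) t).
  { intros; symmetry; apply wave_product. }
  apply (is_RInt_plus (V := R_NormedModule)); apply (is_RInt_scal (V := R_NormedModule));
    apply is_RInt_damped; auto; apply den_norm2_pos; assumption.
Qed.

Definition sqnorm j := x j * x j + y j * y j.

Lemma sqnorm_nonneg j : 0 <= sqnorm j.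
Proof. unfold sqnorm; nra. Qed.

Lemma sqrt_pair_sqnorm (c s : nat -> nat -> R) j l :
  c j l * c j l + s j l * s j l = sqnorm j * sqnorm l ->
  sqrt (c j l * c j l + s j l * s j l) = sqrt (sqnorm j) * sqrt (sqnorm l).
Proof. intros ->; apply sqrt_mult; apply sqnorm_nonneg. Qed.

Lemma sqrt_diff_coefs j l :
  sqrt (cos_diff j l * cos_diff j l + sin_diff j l * sin_diff j l)
  = sqrt (sqnorm j) * sqrt (sqnorm l).
Proof. apply sqrt_pair_sqnorm; unfold cos_diff, sin_diff, sqnorm; ring. Qed.

Lemma sqrt_sum_coefs j l :
  sqrt (cos_sum j l * cos_sum j l + sin_sum j l * sin_sum j l)
  = sqrt (sqnorm j) * sqrt (sqnorm l).
Proof. apply sqrt_pair_sqnorm; unfold cos_sum, sin_sum, sqnorm; ring. Qed.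

Definition damp_factor j := 1 + exp (-((b j + b j) * T)).

Lemma damp_factor_pos j : 0 < damp_factor j.
Proof. unfold damp_factor; pose proof (exp_pos (-((b j + b j) * T))); lra. Qed.

Lemma damp_factor_amgm j l :
  2 * (sqrt (sqnorm j) * sqrt (sqnorm l)) * (1 + exp (-((b j + b l) * T)))
  <= damp_factor j * sqnorm j + damp_factor l * sqnorm l.
Proof.
  unfold damp_factor.
  set (ej := exp (-(b j * T))); set (el := exp (-(b l * T))).
  replace (exp (-((b j + b l) * T))) with (ej * el)
    by (unfold ej, el; rewrite <- exp_plus; f_equal; ring).
  replace (exp (-((b j + b j) * T))) with (ej * ej)
    by (unfold ej; rewrite <- exp_plus; f_equal; ring).
  replace (exp (-((b l + b l) * T))) with (el * el)
    by (unfold el; rewrite <- exp_plus; f_equal; ring).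
  rewrite <- (sqrt_sqrt (sqnorm j)) at 2 by apply sqnorm_nonneg.
  rewrite <- (sqrt_sqrt (sqnorm l)) at 2 by apply sqnorm_nonneg.
  set (u := sqrt (sqnorm j)); set (v := sqrt (sqnorm l)).
  pose proof (pow2_ge_0 (u - v)); pose proof (pow2_ge_0 (ej * u - el * v)); nra.
Qed.

Definition diag_weight j := 2 * nu * damp_factor j / (nu*nu + (b j + b j) * (b j + b j)).

Definition diag_part j l := if Nat.eq_dec j l then diag_weight j * sqnorm j else 0.

Definition diff_weight j l :=
  if Nat.eq_dec j l then 0 else / ((a j - a l) * (a j - a l) - nu*nu).
Definition sum_weight j l := / ((a j + a l) * (a j + a l) - nu*nu).
Definition offdiag_weight j l := diff_weight j l + sum_weight j l.

Lemma offdiag_weight_sym j l : offdiag_weight j l = offdiag_weight l j.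
Proof.
  unfold offdiag_weight, diff_weight, sum_weight; rewrite (Rplus_comm (a l)).
  destruct (Nat.eq_dec j l), (Nat.eq_dec l j); try lia; [reflexivity|].
  replace ((a l - a j) * (a l - a j)) with ((a j - a l) * (a j - a l)) by ring; reflexivity.
Qed.

Lemma pair_term_bound j l theta p q : 0 < nu -> nu*nu < theta*theta ->
  sqrt (p*p + q*q) = sqrt (sqnorm j) * sqrt (sqnorm l) ->
  Rabs (2 * damped_integral T nu (b j + b l) theta p q)
  <= nu * (damp_factor j * sqnorm j + damp_factor l * sqnorm l) / (theta*theta - nu*nu).
Proof.
  intros Hnu Hth Hpq.
  pose proof (damped_integral_bound T nu (b j + b l) theta p q Hnu Hth) as B.
  pose proof (damp_factor_amgm j l) as Hamgm.
  rewrite Hpq in B; rewrite Rabs_mult, (Rabs_pos_eq 2) by lra.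
  assert (HD : 0 < nu / (theta*theta - nu*nu)) by (apply Rdiv_lt_0_compat; lra).
  unfold Rdiv in *; rewrite !Rmult_assoc in B |- *.
  rewrite (Rmult_comm nu), Rmult_assoc.
  apply Rmult_le_compat_r with (r := nu * / (theta*theta - nu*nu)) in Hamgm; nra.
Qed.

Lemma wave_pair_integral_approx j l : 0 < nu ->
  (j <> l -> nu*nu < (a j - a l) * (a j - a l)) -> nu*nu < (a j + a l) * (a j + a l) ->
  Rabs (wave_pair_integral j l - diag_part j l)
  <= nu * (damp_factor j * sqnorm j + damp_factor l * sqnorm l) * offdiag_weight j l.
Proof.
  intros Hnu Hd Hs.
  pose proof (pair_term_bound j l _ _ _ Hnu Hs (sqrt_sum_coefs j l)) as Bs.
  unfold offdiag_weight, diff_weight, sum_weight, diag_part, wave_pair_integral.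
  destruct (Nat.eq_dec j l) as [<-|Hjl].
  - replace (2 * damped_integral T nu (b j + b j) (a j - a j) (cos_diff j j) (sin_diff j j))
      with (diag_weight j * sqnorm j).
    + rewrite Rplus_0_l.
      replace (diag_weight j * sqnorm j
                 + 2 * damped_integral T nu (b j + b j) (a j + a j) (cos_sum j j) (sin_sum j j)
                 - diag_weight j * sqnorm j)
        with (2 * damped_integral T nu (b j + b j) (a j + a j) (cos_sum j j) (sin_sum j j))
        by ring.
      exact Bs.
    + replace (a j - a j) with 0 by ring.
      pose proof (exp_pos (-((b j + b j) * T))).
      rewrite damped_integral_diag by nra.
      unfold diag_weight, damp_factor, cos_diff, sqnorm; field; nra.
  - pose proof (pair_term_bound j l _ _ _ Hnu (Hd Hjl) (sqrt_diff_coefs j l)) as Bd.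
    rewrite Rminus_0_r, Rmult_plus_distr_l.
    eapply Rle_trans; [apply Rabs_triang|]; unfold Rdiv in *; lra.
Qed.

End Waves.

Lemma rsum2_schur (K W : nat -> nat -> R) (f : nat -> R) p q Wb :
  (forall j l, W j l = W l j) ->
  (forall j, (p <= j < p + q)%nat -> 0 <= f j /\ rsum (W j) p q <= Wb) ->
  (forall j l, (p <= j < p + q)%nat -> (p <= l < p + q)%nat ->
     Rabs (K j l) <= (f j + f l) * W j l) ->
  Rabs (rsum (fun j => rsum (K j) p q) p q) <= 2 * Wb * rsum f p q.
Proof.
  intros Hsym Hrow HK.
  assert (Hhalf : rsum (fun j => rsum (fun l => f j * W j l) p q) p q <= Wb * rsum f p q).
  { rewrite <- rsum_scal; apply rsum_le; intros i Hi.
    destruct (Hrow (p + i)%nat) as [Hf HW]; [lia|].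
    rewrite rsum_scal, Rmult_comm; apply Rmult_le_compat_r; assumption. }
  eapply Rle_trans; [apply rsum_abs|].
  apply Rle_trans with (rsum (fun j => rsum (fun l => (f j + f l) * W j l) p q) p q).
  { apply rsum_le; intros i Hi; eapply Rle_trans; [apply rsum_abs|].
    apply rsum_le; intros k Hk; apply HK; lia. }
  rewrite (rsum_ext _ (fun j => rsum (fun l => f j * W j l) p q
                               + rsum (fun l => f l * W l j) p q))
    by (intros; rewrite <- rsum_plus; apply rsum_ext; intros; rewrite (Hsym (p + i)%nat); ring).
  rewrite rsum_plus, (rsum_swap (fun j l => f l * W l j)); lra.
Qed.

Section Energy.
Variables (a b x y : nat -> R) (nu T : R) (n0 : nat).
Hypotheses (HnuT : nu * T = PI) (Hnu : 0 < nu)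
  (Hdiff : forall j l, (n0 <= j)%nat -> (n0 <= l)%nat -> j <> l ->
     nu*nu < (a j - a l) * (a j - a l))
  (Hsum : forall j l, (n0 <= j)%nat -> (n0 <= l)%nat -> nu*nu < (a j + a l) * (a j + a l)).

Definition wave_sum p q t := rsum (fun j => wave a b x y j t) p q.

Definition energy p q :=
  rsum (fun j => rsum (fun l => wave_pair_integral a b x y nu T j l) p q) p q.

Lemma is_RInt_energy p q : (n0 <= p)%nat ->
  is_RInt (fun t => sin (nu*t) * (wave_sum p q t)^2) 0 T (energy p q).
Proof.
  intros Hp.
  apply (is_RInt_ext (V := R_NormedModule)) with (f := fun t =>
    rsum (fun j => rsum (fun l => sin (nu*t) * (wave a b x y j t * wave a b x y l t)) p q) p q).
  { intros t _; unfold wave_sum; rewrite rsum_sqr, <- rsum_scal.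
    apply rsum_ext; intros; rewrite <- rsum_scal; reflexivity. }
  apply is_RInt_rsum; intros i _; apply is_RInt_rsum; intros k _.
  apply is_RInt_wave_product; [exact HnuT| |].
  - destruct (Nat.eq_dec (p + i) (p + k)) as [->|Hik].
    + rewrite Rminus_diag; nra.
    + apply Rgt_not_eq, Hdiff; lia.
  - apply Rgt_not_eq, Hsum; lia.
Qed.

Lemma energy_diag_approx p q Wb : (n0 <= p)%nat ->
  (forall j, (p <= j < p + q)%nat -> rsum (offdiag_weight a nu j) p q <= Wb) ->
  Rabs (energy p q - rsum (fun j => diag_weight b nu T j * sqnorm x y j) p q)
  <= 2 * nu * Wb * rsum (fun j => damp_factor b T j * sqnorm x y j) p q.
Proof.
  intros Hp HW.
  assert (E : energy p q = rsum (fun j => rsum (fun l => wave_pair_integral a b x y nu T j l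
                                                   - diag_part b x y nu T j l) p q
                                           + diag_weight b nu T j * sqnorm x y j) p q).
  { apply rsum_ext; intros i Hi.
    rewrite <- (rsum_delta (fun _ => diag_weight b nu T (p + i) * sqnorm x y (p + i))
                           (p + i) p q), <- rsum_plus by lia.
    apply rsum_ext; intros; unfold diag_part; ring. }
  rewrite E, rsum_plus, Rplus_minus_r.
  replace (2 * nu * Wb * rsum (fun j => damp_factor b T j * sqnorm x y j) p q)
    with (2 * Wb * rsum (fun j => nu * (damp_factor b T j * sqnorm x y j)) p q)
    by (rewrite rsum_scal; ring).
  apply (rsum2_schur _ (offdiag_weight a nu)).
  - apply offdiag_weight_sym.
  - intros j Hj; split; [|apply HW, Hj].
    pose proof (damp_factor_pos b T j); pose proof (sqnorm_nonneg x y j).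
    apply Rmult_le_pos; [lra|apply Rmult_le_pos; lra].
  - intros j l Hj Hl.
    replace ((nu * (damp_factor b T j * sqnorm x y j) + nu * (damp_factor b T l * sqnorm x y l))
             * offdiag_weight a nu j l)
      with (nu * (damp_factor b T j * sqnorm x y j + damp_factor b T l * sqnorm x y l)
            * offdiag_weight a nu j l) by ring.
    apply wave_pair_integral_approx; [exact Hnu| |apply Hsum]; try lia.
    intros; apply Hdiff; lia.
Qed.

End Energy.

Section Gap.
Variables (a : nat -> R) (nu gam A : R) (n0 : nat).
Hypotheses (Hgam : 0 < gam) (Hnu : 0 < nu) (Hnugam : 2 * nu <= gam) (HA : 2 * gam <= A)
  (Hstep : forall n, (n0 <= n)%nat -> gam <= a (S n) - a n) (Ha0 : A <= a n0).

Lemma gap_dist j k : (n0 <= j)%nat -> gam * INR k <= a (j + k)%nat - a j.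
Proof.
  intros Hj; induction k as [|k IH]; [rewrite Nat.add_0_r; simpl; lra|].
  rewrite S_INR, Nat.add_succ_r; specialize (Hstep (j + k)%nat ltac:(lia)); lra.
Qed.

Lemma gap_sep j l : (n0 <= j)%nat -> (j <= l)%nat -> gam * INR (l - j) <= a l - a j.
Proof.
  intros Hj Hjl; pose proof (gap_dist j (l - j) Hj).
  rewrite Nat.add_comm, Nat.sub_add in *; auto.
Qed.

Lemma gap_lower n : (n0 <= n)%nat -> A + gam * INR (n - n0) <= a n.
Proof. intros Hn; pose proof (gap_sep n0 n (le_n _) Hn); lra. Qed.

Lemma gap_lower_A n : (n0 <= n)%nat -> A <= a n.
Proof.
  intros Hn; pose proof (gap_lower n Hn).
  pose proof (Rmult_le_pos gam (INR (n - n0)) (Rlt_le _ _ Hgam) (pos_INR _)); lra.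
Qed.

Lemma gap_diff_nonresonant j l : (n0 <= j)%nat -> (n0 <= l)%nat -> j <> l ->
  nu*nu < (a j - a l) * (a j - a l).
Proof.
  assert (H : forall j l, (n0 <= j)%nat -> (j < l)%nat -> 2 * nu <= a l - a j).
  { intros j' l' Hj Hjl; pose proof (gap_sep j' l' Hj ltac:(lia)).
    assert (1 <= INR (l' - j')) by (apply (le_INR 1); lia); nra. }
  intros Hj Hl Hjl; destruct (Nat.lt_gt_cases j l) as [[Hlt|Hlt] _]; [exact Hjl| |].
  - specialize (H j l Hj Hlt); nra.
  - specialize (H l j Hl Hlt); nra.
Qed.

Lemma gap_sum_nonresonant j l : (n0 <= j)%nat -> (n0 <= l)%nat ->
  nu*nu < (a j + a l) * (a j + a l).
Proof. intros Hj Hl; pose proof (gap_lower_A j Hj); pose proof (gap_lower_A l Hl); nra. Qed.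

(* The bound is [4 / (gam^2 (4 k^2 - 1))], which telescopes in [k]. *)
Lemma inv_resonance_le d k : 1 <= k -> gam * k <= d ->
  / (d*d - nu*nu) <= (2 / (gam*gam)) * (/ (2*k - 1) - / (2*k + 1)).
Proof.
  intros Hk Hd.
  replace ((2 / (gam*gam)) * (/ (2*k - 1) - / (2*k + 1))) with (/ (gam*gam * (4*k*k - 1) / 4))
    by (field; repeat split; nra).
  apply Rinv_le_contravar; [apply Rdiv_lt_0_compat; [apply Rmult_lt_0_compat|]; nra|].
  assert (0 < gam * k) by nra; nra.
Qed.

Lemma diff_weight_left_le p s : (n0 <= p)%nat ->
  rsum (diff_weight a nu (p + s)) p s <= 2 / (gam*gam).
Proof.
  intros Hp.
  set (c := 2 / (gam*gam)); assert (Hc : 0 < c) by (apply Rdiv_lt_0_compat; nra).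
  apply Rle_trans with (c / (2 * (INR s - INR s) + 1) - c / (2 * (INR s - INR 0) + 1)).
  - apply (rsum_telescope _ (fun i => c / (2 * (INR s - INR i) + 1))); intros i Hi.
    unfold diff_weight; destruct (Nat.eq_dec (p + s) (p + i)) as [E|E]; [lia|].
    assert (Hk : 1 <= INR s - INR i) by (rewrite <- minus_INR by lia; apply (le_INR 1); lia).
    pose proof (gap_sep (p + i) (p + s) ltac:(lia) ltac:(lia)) as Hd.
    replace (p + s - (p + i))%nat with (s - i)%nat in Hd by lia.
    rewrite minus_INR in Hd by lia.
    eapply Rle_trans; [apply inv_resonance_le; [exact Hk|exact Hd]|].
    right; rewrite S_INR; unfold c; field; repeat split; lra.
  - simpl INR; rewrite Rminus_diag, Rmult_0_r, Rplus_0_l, Rdiv_1_r, Rminus_0_r.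
    pose proof (pos_INR s).
    assert (0 <= c / (2 * INR s + 1)) by (apply Rlt_le, Rdiv_lt_0_compat; lra); lra.
Qed.

Lemma diff_weight_right_le r j : (n0 <= j)%nat ->
  rsum (diff_weight a nu j) (S j) r <= 2 / (gam*gam).
Proof.
  intros Hj.
  set (c := 2 / (gam*gam)); assert (Hc : 0 < c) by (apply Rdiv_lt_0_compat; nra).
  apply Rle_trans with (- c / (2 * INR r + 1) - - c / (2 * INR 0 + 1)).
  - apply (rsum_telescope _ (fun i => - c / (2 * INR i + 1))); intros i Hi.
    unfold diff_weight; destruct (Nat.eq_dec j (S j + i)) as [E|E]; [lia|].
    pose proof (pos_INR i).
    pose proof (gap_sep j (S j + i) Hj ltac:(lia)) as Hd.
    replace (S j + i - j)%nat with (S i) in Hd by lia; rewrite S_INR in Hd.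
    replace ((a j - a (S j + i)%nat) * (a j - a (S j + i)%nat))
      with ((a (S j + i)%nat - a j) * (a (S j + i)%nat - a j)) by ring.
    eapply Rle_trans; [apply (inv_resonance_le _ (INR i + 1)); [lra|exact Hd]|].
    right; rewrite S_INR; unfold c; field; repeat split; lra.
  - simpl INR; rewrite Rmult_0_r, Rplus_0_l, Rdiv_1_r.
    pose proof (pos_INR r).
    assert (0 <= c / (2 * INR r + 1)) by (apply Rlt_le, Rdiv_lt_0_compat; lra).
    unfold Rdiv in *; lra.
Qed.

Lemma sum_weight_le p q j : (n0 <= p)%nat -> (n0 <= j)%nat ->
  rsum (sum_weight a nu j) p q <= (4/3) / (gam * (A - gam)).
Proof.
  intros Hp Hj.
  set (F := fun i : nat => -(4/3) / (gam * (A + gam * (INR i - 1)))).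
  apply Rle_trans with (F q - F O).
  - apply rsum_telescope; intros i Hi; unfold F, sum_weight.
    pose proof (pos_INR i).
    pose proof (gap_lower_A j Hj).
    pose proof (gap_lower (p + i) ltac:(lia)).
    assert (INR i <= INR (p + i - n0)) by (apply le_INR; lia).
    set (s := A + gam * INR i).
    assert (Hs : s <= a j + a (p + i)%nat) by (unfold s; nra).
    assert (Hs0 : 2 * gam <= s) by (unfold s; nra).
    replace (- (4/3) / (gam * (A + gam * (INR (S i) - 1)))
             - - (4/3) / (gam * (A + gam * (INR i - 1))))
      with (/ ((3/4) * ((s - gam) * s))) by (rewrite S_INR; unfold s; field; repeat split; nra).
    apply Rinv_le_contravar; nra.
  - unfold F; simpl INR; pose proof (pos_INR q).
    assert (0 < gam * (A + gam * (INR q - 1))) by nra.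
    assert (0 <= (4/3) / (gam * (A + gam * (INR q - 1))))
      by (apply Rlt_le, Rdiv_lt_0_compat; lra).
    replace (A + gam * (0 - 1)) with (A - gam) by ring; unfold Rdiv in *; lra.
Qed.

Definition row_bound := 4 / (gam*gam) + (4/3) / (gam * (A - gam)).

Lemma offdiag_weight_row_le p q j : (n0 <= p)%nat -> (p <= j < p + q)%nat ->
  rsum (offdiag_weight a nu j) p q <= row_bound.
Proof.
  intros Hp Hj; unfold offdiag_weight, row_bound.
  rewrite (rsum_plus (diff_weight a nu j) (sum_weight a nu j)).
  pose proof (sum_weight_le p q j Hp ltac:(lia)).
  replace q with ((j - p) + S (p + q - j - 1))%nat by lia.
  rewrite rsum_split, rsum_cons; replace (p + (j - p))%nat with j by lia.
  pose proof (diff_weight_left_le p (j - p) Hp) as Hleft.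
  replace (p + (j - p))%nat with j in Hleft by lia.
  pose proof (diff_weight_right_le (p + q - j - 1) j ltac:(lia)).
  replace (diff_weight a nu j j) with 0
    by (unfold diff_weight; destruct (Nat.eq_dec j j); congruence).
  replace ((j - p) + S (p + q - j - 1))%nat with q in * by lia.
  lra.
Qed.
End Gap.

Lemma gap_reaches (a : nat -> R) gam N A : 0 < gam ->
  (forall n, (N <= n)%nat -> gam <= a (S n) - a n) -> exists n0, (N <= n0)%nat /\ A <= a n0.
Proof.
  intros Hgam Hstep.
  destruct (INR_archimed gam (A - a N) Hgam) as [k Hk].
  exists (N + k)%nat; split; [lia|].
  pose proof (gap_dist a gam N Hstep N k (le_n _)); lra.
Qed.

Lemma Un_cv_scal c u l : Un_cv u l -> Un_cv (fun n => c * u n) (c * l).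
Proof.
  intros H; apply CV_mult; [|exact H].
  intros e He; exists O; intros; unfold R_dist; rewrite Rminus_diag, Rabs_R0; exact He.
Qed.

Lemma Cauchy_crit_of_increments (u : nat -> R) :
  (forall e, 0 < e -> exists N, forall n r, (N <= n)%nat -> Rabs (u (n + r)%nat - u n) < e) ->
  Cauchy_crit u.
Proof.
  intros H e He; destruct (H e He) as [N HN]; exists N; intros n m Hn Hm; unfold R_dist.
  destruct (Nat.le_gt_cases n m) as [Hnm|Hnm].
  - replace m with (n + (m - n))%nat by lia; rewrite Rabs_minus_sym; apply HN, Hn.
  - replace n with (m + (n - m))%nat by lia; apply HN, Hm.
Qed.

Definition small_tails (z : nat -> R) :=
  forall e, 0 < e -> exists N, forall p q, (N <= p)%nat -> rsum z p q <= e.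

Section SmallTails.
Variables (z : nat -> R) (p0 : nat).
Hypotheses (Hz : forall j, (p0 <= j)%nat -> 0 <= z j) (Htail : small_tails z).

Lemma small_tails_bounded : exists L, forall q, rsum z p0 q <= L.
Proof.
  destruct (Htail 1 Rlt_0_1) as [N HN].
  exists (rsum z p0 (N - p0) + 1); intros q.
  assert (Hr : rsum z p0 (N - p0 + q) <= rsum z p0 (N - p0) + 1).
  { rewrite rsum_split; specialize (HN (p0 + (N - p0))%nat q ltac:(lia)); lra. }
  rewrite Nat.add_comm, rsum_split in Hr.
  enough (0 <= rsum z (p0 + q) (N - p0)) by lra.
  apply rsum_nonneg; intros; apply Hz; lia.
Qed.

Lemma series_Cauchy_of_small_tails (f : nat -> R) K :
  (forall j, (p0 <= j)%nat -> Rabs (f j) <= K * z j) ->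
  Cauchy_crit (sum_f_R0 (fun j => f (p0 + j)%nat)).
Proof.
  intros Hf; apply Cauchy_crit_of_increments; intros e He.
  assert (HK : 0 < Rabs K + 1) by (pose proof (Rabs_pos K); lra).
  destruct (Htail (e / (2 * (Rabs K + 1)))) as [N HN]; [apply Rdiv_lt_0_compat; lra|].
  exists N; intros n r Hn.
  rewrite !sum_f_R0_rsum, <- Nat.add_succ_l, rsum_split, Rplus_minus_l.
  eapply Rle_lt_trans; [apply rsum_abs|].
  apply Rle_lt_trans with (rsum (fun j => (Rabs K + 1) * z j) (p0 + S n) r).
  - apply rsum_le; intros i Hi; eapply Rle_trans; [apply Hf; lia|].
    pose proof (Hz (p0 + S n + i) ltac:(lia)); pose proof (Rle_abs K); nra.
  - rewrite rsum_scal; specialize (HN (p0 + S n)%nat r ltac:(lia)).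
    apply (Rmult_le_compat_l (Rabs K + 1)) in HN; [|lra].
    replace ((Rabs K + 1) * (e / (2 * (Rabs K + 1)))) with (e / 2) in HN by (field; lra).
    lra.
Qed.
End SmallTails.

Lemma small_tails_of_series (z : nat -> R) l :
  infinite_sum (fun n => z (S n)) l -> small_tails z.
Proof.
  intros Hl e He; destruct (CV_Cauchy _ (exist _ l Hl) e He) as [N HN].
  exists (S (S N)); intros p q Hp.
  specialize (HN (p - 2 + q)%nat (p - 2)%nat ltac:(lia) ltac:(lia)); unfold R_dist in HN.
  rewrite !(sum_f_R0_rsum z 1) in HN.
  replace (S (p - 2 + q)) with (S (p - 2) + q)%nat in HN by lia.
  rewrite rsum_split, Rplus_minus_l in HN.
  replace (1 + S (p - 2))%nat with p in HN by lia.
  pose proof (Rle_abs (rsum z p q)); lra.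
Qed.

Lemma small_tails_dominated (z z' : nat -> R) p0 mu : 0 <= mu ->
  (forall j, (p0 <= j)%nat -> z' j <= mu * z j) -> small_tails z -> small_tails z'.
Proof.
  intros Hmu Hz' Hz e He.
  destruct (Hz (e / (mu + 1))) as [N HN]; [apply Rdiv_lt_0_compat; lra|].
  exists (Nat.max N p0); intros p q Hp.
  apply Rle_trans with (mu * rsum z p q).
  { rewrite <- rsum_scal; apply rsum_le; intros; apply Hz'; lia. }
  apply Rle_trans with (mu * (e / (mu + 1))); [apply Rmult_le_compat_l; [lra|apply HN; lia]|].
  apply (Rmult_le_reg_r (mu + 1)); [lra|].
  replace (mu * (e / (mu + 1)) * (mu + 1)) with (mu * e) by (field; lra); nra.
Qed.

Lemma cross_term_small e U : 0 < e -> 0 <= U -> exists eta, 0 < eta /\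
  forall Vf Vg Vfg, 0 <= Vf <= U -> 0 <= Vg <= eta ->
  (forall lam, 0 < lam -> Rabs (Vfg - Vf - Vg) <= lam * Vf + Vg / lam) ->
  Rabs (Vfg - Vf) < e.
Proof.
  intros He HU.
  set (lam := e / (2 * (U + 1))).
  assert (Hlam : 0 < lam) by (apply Rdiv_lt_0_compat; lra).
  exists (e / (4 * (1 + / lam))); split.
  { apply Rdiv_lt_0_compat; [|pose proof (Rinv_0_lt_compat _ Hlam)]; lra. }
  intros Vf Vg Vfg HVf HVg Hcross.
  specialize (Hcross lam Hlam).
  assert (H1 : lam * Vf < e / 2).
  { apply Rle_lt_trans with (lam * U); [apply Rmult_le_compat_l; lra|].
    unfold lam; apply (Rmult_lt_reg_r (2 * (U + 1))); [lra|].
    replace (e / (2 * (U + 1)) * U * (2 * (U + 1))) with (e * U) by (field; lra).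
    replace (e / 2 * (2 * (U + 1))) with (e * U + e) by field; lra. }
  assert (H2 : Vg / lam + Vg <= e / 4).
  { pose proof (Rinv_0_lt_compat _ Hlam).
    replace (Vg / lam + Vg) with ((1 + / lam) * Vg) by (field; lra).
    apply Rle_trans with ((1 + / lam) * (e / (4 * (1 + / lam)))); [apply Rmult_le_compat_l; lra|].
    right; field; lra. }
  assert (Rabs (Vfg - Vf) <= Rabs (Vfg - Vf - Vg) + Vg).
  { pose proof (Rabs_triang (Vfg - Vf - Vg) Vg) as Ht.
    rewrite (Rabs_pos_eq Vg) in Ht by lra.
    replace (Vfg - Vf - Vg + Vg) with (Vfg - Vf) in Ht by ring; exact Ht. }
  lra.
Qed.

Lemma is_RInt_cross_term_bound (s f g : R -> R) T Vf Vg Vfg lam : 0 < T -> 0 < lam ->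
  (forall t, 0 < t < T -> 0 <= s t) ->
  is_RInt (fun t => s t * (f t)^2) 0 T Vf -> is_RInt (fun t => s t * (g t)^2) 0 T Vg ->
  is_RInt (fun t => s t * (f t + g t)^2) 0 T Vfg ->
  Rabs (Vfg - Vf - Vg) <= lam * Vf + Vg / lam.
Proof.
  intros HT Hlam Hs Hf Hg Hfg.
  (* [lam f^2 + g^2 / lam + 2 sg f g = (lam f + sg g)^2 / lam >= 0] for [sg = 1, -1] *)
  assert (K : forall sg, sg * sg = 1 -> 0 <= lam * Vf + Vg / lam + sg * (Vfg - Vf - Vg)).
  { intros sg Hsg.
    pose proof (is_RInt_plus (V := R_NormedModule) _ _ _ _ _ _
      (is_RInt_plus (V := R_NormedModule) _ _ _ _ _ _
         (is_RInt_scal (V := R_NormedModule) _ _ _ lam _ Hf)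
         (is_RInt_scal (V := R_NormedModule) _ _ _ (/ lam) _ Hg))
      (is_RInt_scal (V := R_NormedModule) _ _ _ sg _
         (is_RInt_minus (V := R_NormedModule) _ _ _ _ _ _
            (is_RInt_minus (V := R_NormedModule) _ _ _ _ _ _ Hfg Hf) Hg))) as H.
    apply is_RInt_ge_0 in H; [| lra |].
    - revert H; unfold minus, plus, opp, scal; simpl; unfold mult; simpl; unfold Rdiv; lra.
    - intros t Ht; specialize (Hs t Ht).
      set (st := s t); set (ft := f t); set (gt := g t).
      unfold minus, plus, opp, scal; simpl; unfold mult; simpl.
      apply Rle_trans with (st * ((lam * ft + sg * gt)^2 / lam)).
      { apply Rmult_le_pos; [exact Hs|apply Rmult_le_pos; [apply pow2_ge_0|]].
        left; apply Rinv_0_lt_compat, Hlam. }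
      right; transitivity (st * (lam * ft^2 + 2 * sg * ft * gt + (sg * sg) * gt^2 / lam));
        [field; lra|rewrite Hsg; field; lra]. }
  pose proof (K 1 ltac:(ring)); pose proof (K (-1) ltac:(ring)).
  apply Rabs_le; lra.
Qed.

Section Estimates.
Variables (a b : nat -> R) (nu T gam A B : R) (n0 : nat).
Hypotheses (HT : 0 < T) (HnuT : nu * T = PI) (Hnu : 0 < nu) (Hgam : 0 < gam)
  (Hnugam : 2 * nu <= gam) (HA : 2 * gam <= A)
  (Hstep : forall n, (n0 <= n)%nat -> gam <= a (S n) - a n) (Ha0 : A <= a n0)
  (HB : forall n, (n0 <= n)%nat -> Rabs (b n) <= B).

Lemma row_bound_pos : 0 < row_bound gam A.
Proof.
  unfold row_bound.
  assert (0 < 4 / (gam*gam)) by (apply Rdiv_lt_0_compat; nra).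
  assert (0 < 4/3 / (gam * (A - gam))) by (apply Rdiv_lt_0_compat; nra).
  lra.
Qed.

Lemma energy_approx x y p q : (n0 <= p)%nat ->
  Rabs (energy a b x y nu T p q - rsum (fun j => diag_weight b nu T j * sqnorm x y j) p q)
  <= 2 * nu * row_bound gam A * rsum (fun j => damp_factor b T j * sqnorm x y j) p q.
Proof.
  intros Hp; apply (energy_diag_approx a b x y nu T n0); auto.
  - apply (gap_diff_nonresonant a nu gam n0); assumption.
  - apply (gap_sum_nonresonant a nu gam A n0); assumption.
  - intros; apply (offdiag_weight_row_le a nu gam A n0); assumption.
Qed.

Lemma energy_ge x y p q : (n0 <= p)%nat ->
  rsum (fun j => (diag_weight b nu T j - 2 * nu * row_bound gam A * damp_factor b T j)
                 * sqnorm x y j) p q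
  <= energy a b x y nu T p q.
Proof.
  intros Hp; pose proof (energy_approx x y p q Hp) as H; apply Rabs_le_between in H.
  rewrite <- rsum_scal in H.
  rewrite (rsum_ext _ (fun j => diag_weight b nu T j * sqnorm x y j
     - 2 * nu * row_bound gam A * (damp_factor b T j * sqnorm x y j)))
    by (intros; ring).
  rewrite rsum_minus; lra.
Qed.

Lemma energy_le x y p q : (n0 <= p)%nat ->
  energy a b x y nu T p q
  <= rsum (fun j => (diag_weight b nu T j + 2 * nu * row_bound gam A * damp_factor b T j)
                    * sqnorm x y j) p q.
Proof.
  intros Hp; pose proof (energy_approx x y p q Hp) as H; apply Rabs_le_between in H.
  rewrite <- rsum_scal in H.
  rewrite (rsum_ext _ (fun j => diag_weight b nu T j * sqnorm x y j
     + 2 * nu * row_bound gam A * (damp_factor b T j * sqnorm x y j)))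
    by (intros; ring).
  rewrite rsum_plus; lra.
Qed.

Lemma is_RInt_energy_gap x y p q : (n0 <= p)%nat ->
  is_RInt (fun t => sin (nu*t) * (wave_sum a b x y p q t)^2) 0 T (energy a b x y nu T p q).
Proof.
  apply (is_RInt_energy a b x y nu T n0 HnuT Hnu).
  - apply (gap_diff_nonresonant a nu gam n0); assumption.
  - apply (gap_sum_nonresonant a nu gam A n0); assumption.
Qed.

Lemma sin_kernel_nonneg t : 0 < t < T -> 0 <= sin (nu*t).
Proof. intros Ht; apply sin_ge_0; nra. Qed.

Lemma energy_nonneg x y p q : (n0 <= p)%nat -> 0 <= energy a b x y nu T p q.
Proof.
  intros Hp; apply (is_RInt_ge_0 _ 0 T _ (Rlt_le _ _ HT) (is_RInt_energy_gap x y p q Hp)).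
  intros t Ht; apply Rmult_le_pos; [apply sin_kernel_nonneg, Ht|apply pow2_ge_0].
Qed.

Definition energy_const := (2 / nu + 2 * nu * row_bound gam A) * (1 + exp (2 * B * T)).

Lemma damp_factor_le j : (n0 <= j)%nat -> damp_factor b T j <= 1 + exp (2 * B * T).
Proof.
  intros Hj; unfold damp_factor; apply Rplus_le_compat_l.
  assert (H : -((b j + b j) * T) <= 2 * B * T)
    by (specialize (HB j Hj); apply Rabs_le_between in HB; nra).
  destruct (Rle_lt_or_eq_dec _ _ H) as [Hlt| ->]; [left; apply exp_increasing, Hlt|lra].
Qed.

Lemma energy_le_const x y p q : (n0 <= p)%nat ->
  energy a b x y nu T p q <= energy_const * rsum (sqnorm x y) p q.
Proof.
  intros Hp; eapply Rle_trans; [apply energy_le, Hp|].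
  rewrite <- rsum_scal; apply rsum_le; intros i Hi.
  apply Rmult_le_compat_r; [apply sqnorm_nonneg|]; unfold energy_const.
  pose proof (damp_factor_pos b T (p + i)) as Hd0.
  pose proof (damp_factor_le (p + i) ltac:(lia)) as Hd.
  assert (diag_weight b nu T (p + i) <= 2 / nu * damp_factor b T (p + i)).
  { unfold diag_weight; apply Rle_trans with (2 * nu * damp_factor b T (p + i) / (nu*nu)).
    - apply Rmult_le_compat_l; [nra|apply Rinv_le_contravar; nra].
    - right; field; lra. }
  assert (0 < 2 * nu * row_bound gam A) by (pose proof row_bound_pos; nra).
  assert (0 < 2 / nu) by (apply Rdiv_lt_0_compat; lra).
  set (k := 2 * nu * row_bound gam A) in *; set (c := 2 / nu) in *; nra.
Qed.

Lemma energy_const_pos : 0 < energy_const.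
Proof.
  unfold energy_const; pose proof row_bound_pos; pose proof (exp_pos (2 * B * T)).
  assert (0 < 2 / nu) by (apply Rdiv_lt_0_compat; lra).
  apply Rmult_lt_0_compat; nra.
Qed.

Lemma energy_Cauchy x y : small_tails (sqnorm x y) ->
  Cauchy_crit (fun m => energy a b x y nu T n0 m).
Proof.
  intros Htail.
  destruct (small_tails_bounded _ n0 (fun j _ => sqnorm_nonneg x y j) Htail) as [L HL].
  assert (HL0 : 0 <= L) by (specialize (HL O); simpl in HL; lra).
  pose proof energy_const_pos as HK.
  apply Cauchy_crit_of_increments; intros e He.
  destruct (cross_term_small e (energy_const * L) He ltac:(nra)) as [eta [Heta Hsmall]].
  destruct (Htail (eta / energy_const)) as [N HN]; [apply Rdiv_lt_0_compat; lra|].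
  exists N; intros n r Hn; apply (Hsmall _ (energy a b x y nu T (n0 + n) r)).
  - split; [apply energy_nonneg; lia|].
    eapply Rle_trans; [apply energy_le_const; lia|].
    apply Rmult_le_compat_l; [lra|apply HL].
  - split; [apply (energy_nonneg _ _ (n0 + n)); lia|].
    eapply Rle_trans; [apply (energy_le_const _ _ (n0 + n)); lia|].
    apply Rle_trans with (energy_const * (eta / energy_const)); [|right; field; lra].
    apply Rmult_le_compat_l; [lra|apply HN; lia].
  - intros lam Hlam.
    apply (is_RInt_cross_term_bound (fun t => sin (nu*t))
             (wave_sum a b x y n0 n) (wave_sum a b x y (n0 + n) r) T); auto.
    + exact sin_kernel_nonneg.
    + apply is_RInt_energy_gap; lia.
    + apply is_RInt_energy_gap; lia.
    + apply (is_RInt_ext (V := R_NormedModule))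
        with (f := fun t => sin (nu*t) * (wave_sum a b x y n0 (n + r) t)^2).
      * intros; unfold wave_sum; rewrite rsum_split; reflexivity.
      * apply is_RInt_energy_gap; lia.
Qed.

Lemma energy_difference_ge x y x' y' mu (coef : nat -> R) m : 0 <= mu ->
  (forall j, (n0 <= j)%nat -> sqnorm x' y' j <= mu * sqnorm x y j) ->
  (forall j, (n0 <= j)%nat ->
     coef j <= diag_weight b nu T j - 2 * nu * row_bound gam A * damp_factor b T j
               - 2 * mu * (diag_weight b nu T j + 2 * nu * row_bound gam A * damp_factor b T j)) ->
  rsum (fun j => coef j * sqnorm x y j) n0 m
  <= energy a b x y nu T n0 m - 2 * energy a b x' y' nu T n0 m.
Proof.
  intros Hmu Hx' Hcoef.
  pose proof (energy_ge x y n0 m (le_n _)); pose proof (energy_le x' y' n0 m (le_n _)).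
  enough (rsum (fun j => coef j * sqnorm x y j) n0 m
          <= rsum (fun j => (diag_weight b nu T j - 2 * nu * row_bound gam A * damp_factor b T j)
                            * sqnorm x y j) n0 m
             - 2 * rsum (fun j => (diag_weight b nu T j
                                   + 2 * nu * row_bound gam A * damp_factor b T j)
                                  * sqnorm x' y' j) n0 m) by lra.
  rewrite <- rsum_scal, <- rsum_minus; apply rsum_le; intros i Hi.
  specialize (Hcoef (n0 + i)%nat ltac:(lia)); specialize (Hx' (n0 + i)%nat ltac:(lia)).
  pose proof (sqnorm_nonneg x y (n0 + i)); pose proof (sqnorm_nonneg x' y' (n0 + i)).
  pose proof (damp_factor_pos b T (n0 + i)); pose proof row_bound_pos.
  assert (0 < 2 * nu * row_bound gam A) by nra.
  assert (0 < diag_weight b nu T (n0 + i)) by (unfold diag_weight; apply Rdiv_lt_0_compat; nra).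
  set (dg := diag_weight b nu T (n0 + i)) in *; set (u := damp_factor b T (n0 + i)) in *.
  set (k := 2 * nu * row_bound gam A) in *.
  set (X := sqnorm x y (n0 + i)) in *; set (X' := sqnorm x' y' (n0 + i)) in *.
  assert (coef (n0 + i)%nat * X <= (dg - k * u - 2 * mu * (dg + k * u)) * X)
    by (apply Rmult_le_compat_r; assumption).
  assert ((dg + k * u) * X' <= (dg + k * u) * (mu * X)) by (apply Rmult_le_compat_l; nra).
  nra.
Qed.

End Estimates.

Lemma wterm_real w C t : wterm w C t =
  RtoC (2 * exp (-(Im w * t)) * (Re C * cos (Re w * t) - Im C * sin (Re w * t))).
Proof.
  unfold wterm, Cadd, Cmul, Cexp, Cconj, Copp, Ci, RtoC; simpl; f_equal.
  all: replace (0 * (Re w * t - Im w * 0) - 1 * (Re w * 0 + Im w * t)) with (-(Im w * t)) by ring;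
       replace (0 * (Re w * 0 + Im w * t) + 1 * (Re w * t - Im w * 0)) with (Re w * t) by ring;
       replace (- 0 * (Re w * t - - Im w * 0) - - (1) * (Re w * 0 + - Im w * t))
         with (-(Im w * t)) by ring;
       replace (- 0 * (Re w * 0 + - Im w * t) + - (1) * (Re w * t - - Im w * 0))
         with (-(Re w * t)) by ring;
       rewrite cos_neg, sin_neg; ring.
Qed.

Lemma Csum_wterm (w C : nat -> Cx) n0 m t :
  Csum (fun n => wterm (w n) (C n) t) n0 m
  = RtoC (wave_sum (fun n => Re (w n)) (fun n => Im (w n))
                   (fun n => Re (C n)) (fun n => Im (C n)) n0 m t).
Proof.
  induction m as [|m IH]; [reflexivity|].
  simpl; rewrite IH, wterm_real; unfold Cadd, RtoC, wave_sum, wave; simpl; f_equal; ring.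
Qed.

Lemma Cmod2_RtoC r : Cmod2 (RtoC r) = r^2.
Proof. unfold Cmod2, RtoC; simpl; ring. Qed.

Lemma Cmod2_Cmul z u : Cmod2 (Cmul z u) = Cmod2 z * Cmod2 u.
Proof. unfold Cmod2, Cmul; simpl; ring. Qed.

Lemma Cmod2_le_of_Cmod_le (z u : Cx) M A : 0 < A -> A <= Re u -> Cmod z <= M / Cmod u ->
  Cmod2 z <= M*M / (A*A).
Proof.
  intros HA Hu Hz.
  assert (HuA : A*A <= Cmod2 u) by (unfold Cmod2; nra).
  assert (HA2 : 0 < A*A) by nra.
  assert (Hu0 : 0 < Cmod u) by (apply sqrt_lt_R0; lra).
  assert (Hz0 : 0 <= Cmod z) by apply sqrt_pos.
  assert (Eu : Cmod u * Cmod u = Cmod2 u) by (apply sqrt_sqrt; lra).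
  assert (Ez : Cmod z * Cmod z = Cmod2 z) by (apply sqrt_sqrt; unfold Cmod2; nra).
  rewrite <- Ez; apply Rle_trans with ((M / Cmod u) * (M / Cmod u)).
  - apply Rmult_le_compat; assumption.
  - replace ((M / Cmod u) * (M / Cmod u)) with (M*M / (Cmod u * Cmod u)) by (field; lra).
    rewrite Eu; apply Rmult_le_compat_l; [nra|apply Rinv_le_contravar; nra].
Qed.

Lemma IsRInt_of_is_RInt f a b v : is_RInt f a b v -> IsRInt f a b v.
Proof.
  intros H; assert (E : ex_RInt f a b) by (exists v; exact H).
  exists (ex_RInt_Reals_0 f a b E); rewrite <- RInt_Reals; apply is_RInt_unique, H.
Qed.

Lemma is_RInt_integrand w c Cc T n0 m Vw Vcw : 0 < T ->
  is_RInt (fun t => sin (PI / T * t) *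
    (wave_sum (fun n => Re (w n)) (fun n => Im (w n)) (fun n => Re (Cc n)) (fun n => Im (Cc n))
              n0 m t)^2) 0 T Vw ->
  is_RInt (fun t => sin (PI / T * t) *
    (wave_sum (fun n => Re (w n)) (fun n => Im (w n))
              (fun n => Re (Cmul (c n) (Cc n))) (fun n => Im (Cmul (c n) (Cc n))) n0 m t)^2)
    0 T Vcw ->
  is_RInt (integrand w c Cc T n0 m) 0 T (Vw - 2 * Vcw).
Proof.
  intros HT Hw Hcw.
  apply (is_RInt_ext (V := R_NormedModule)) with (f := fun t => minus
     (sin (PI / T * t) * (wave_sum (fun n => Re (w n)) (fun n => Im (w n))
        (fun n => Re (Cc n)) (fun n => Im (Cc n)) n0 m t)^2)
     (scal 2 (sin (PI / T * t) * (wave_sum (fun n => Re (w n)) (fun n => Im (w n))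
        (fun n => Re (Cmul (c n) (Cc n))) (fun n => Im (Cmul (c n) (Cc n))) n0 m t)^2))).
  - intros t Ht; rewrite Rmin_left, Rmax_right in Ht by lra.
    unfold integrand, kern; destruct (Rle_dec 0 t); [|lra]; destruct (Rle_dec t T); [|lra].
    rewrite !Csum_wterm, !Cmod2_RtoC; replace (PI * t / T) with (PI / T * t) by (field; lra).
    unfold minus, plus, opp, scal; simpl; unfold mult; simpl; ring.
  - apply (is_RInt_minus (V := R_NormedModule)); [exact Hw|].
    apply (is_RInt_scal (V := R_NormedModule)), Hcw.
Qed.

Lemma weight_margin dg u nu c W Wmax mu eps K d :
  0 < nu -> 0 < u -> 0 < K -> 0 <= mu -> 0 <= W -> 2 * nu * u <= K * dg ->
  W <= c + d -> W <= Wmax -> mu <= d -> d <= eps / 4 -> d * (K * (2 + 4 * Wmax)) <= eps ->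
  (1 - eps) * dg - 2 * nu * c * u <= dg - 2 * nu * W * u - 2 * mu * (dg + 2 * nu * W * u).
Proof.
  intros Hnu Hu HK Hmu HW Hdg HWc HWm Hmud Hd4 HdK.
  assert (Hnu_u : 0 < nu * u) by nra.
  assert (Hdg0 : 0 < dg) by nra.
  assert (H1 : 2 * mu * dg <= eps / 2 * dg) by nra.
  assert (H2 : 2 * (W - c) + 4 * mu * W <= d * (2 + 4 * Wmax)) by nra.
  assert (H3 : d * (2 + 4 * Wmax) * (nu * u) <= eps / 2 * dg).
  { apply (Rmult_le_reg_r K); [exact HK|].
    apply Rle_trans with (eps * (nu * u)); [|nra].
    replace (d * (2 + 4 * Wmax) * (nu * u) * K) with (d * (K * (2 + 4 * Wmax)) * (nu * u))
      by ring.
    apply Rmult_le_compat_r; lra. }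
  assert (H4 : (2 * (W - c) + 4 * mu * W) * (nu * u) <= d * (2 + 4 * Wmax) * (nu * u))
    by (apply Rmult_le_compat_r; lra).
  nra.
Qed.

(* Beyond [n0] the real parts grow at least at rate [gap_rate]; [margin] is the slack left
   in the [eps]-margin for the error terms, and [start_level] is how large [Re (w n0)] must be
   for them to fit in it. *)
Definition gap_rate g eps := g * (1 - eps / 4).
Definition weight_cap g := 8 / (g*g) + 1.
Definition margin g eps B := eps / (4 * (1 + (g*g + 4*B*B) * (2 + 4 * weight_cap g))).
Definition start_level M g eps B :=
  2 * gap_rate g eps + (8/3) / (gap_rate g eps * margin g eps B) + M*M / margin g eps B + 1.

Section Margins.
Variables (M g eps B : R).
Hypotheses (Hg : 0 < g) (Heps : 0 < eps < 1).

Lemma gap_rate_pos : 0 < gap_rate g eps.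
Proof. unfold gap_rate; nra. Qed.

Lemma inv_gap_rate_sqr_le : 4 / (gap_rate g eps * gap_rate g eps) <= 4 * (1 + eps) / (g*g).
Proof.
  unfold gap_rate.
  replace (4 * (1 + eps) / (g*g))
    with (4 / (g * (1 - eps/4) * (g * (1 - eps/4))) * ((1 - eps/4) * (1 - eps/4) * (1 + eps)))
    by (field; split; lra).
  rewrite <- (Rmult_1_r (4 / _)) at 1.
  apply Rmult_le_compat_l; [apply Rlt_le, Rdiv_lt_0_compat; nra|nra].
Qed.

Lemma weight_cap_ge : 8 / (g*g) <= weight_cap g.
Proof. unfold weight_cap; lra. Qed.

Lemma margin_spec :
  0 < margin g eps B /\ margin g eps B <= eps / 4 /\ margin g eps B <= 1 /\
  margin g eps B * ((g*g + 4*B*B) * (2 + 4 * weight_cap g)) <= eps.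
Proof.
  unfold margin.
  assert (0 < 8 / (g*g)) by (apply Rdiv_lt_0_compat; nra).
  pose proof weight_cap_ge.
  set (P := (g*g + 4*B*B) * (2 + 4 * weight_cap g)).
  assert (HP : 0 <= P) by (unfold P; apply Rmult_le_pos; nra).
  assert (E : eps / (4 * (1 + P)) = eps / 4 * / (1 + P)) by (field; lra).
  assert (Hinv : 0 < / (1 + P) <= 1)
    by (split; [apply Rinv_0_lt_compat|rewrite <- Rinv_1; apply Rinv_le_contravar]; lra).
  rewrite E; repeat split; try nra.
  apply Rle_trans with (eps / 4 * (/ (1 + P) * (1 + P))); [nra|].
  rewrite Rinv_l by lra; lra.
Qed.

Lemma start_level_spec :
  2 * gap_rate g eps <= start_level M g eps B /\
  (4/3) / (gap_rate g eps * (start_level M g eps B - gap_rate g eps)) <= margin g eps B /\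
  M*M / (start_level M g eps B * start_level M g eps B) <= margin g eps B.
Proof.
  pose proof gap_rate_pos as Hgam; destruct margin_spec as [Hd _].
  set (gam := gap_rate g eps) in *; set (d := margin g eps B) in *.
  assert (H1 : 0 < (8/3) / (gam * d)) by (apply Rdiv_lt_0_compat; nra).
  assert (H2 : 0 <= M*M / d) by (apply Rmult_le_pos; [nra|apply Rlt_le, Rinv_0_lt_compat, Hd]).
  unfold start_level; fold gam d; set (A := 2 * gam + (8/3) / (gam * d) + M*M / d + 1).
  repeat split; [unfold A; lra| |].
  - apply Rle_trans with ((4/3) / ((8/3) / (gam * d) * gam / 2)).
    + assert (Hq : 0 < (8/3) / (gam * d) * gam) by (apply Rmult_lt_0_compat; lra).
      apply Rmult_le_compat_l; [lra|apply Rinv_le_contravar; [lra|]].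
      apply Rle_trans with ((8/3) / (gam * d) * gam); [lra|].
      rewrite Rmult_comm; apply Rmult_le_compat_l; unfold A; lra.
    + right; field; lra.
  - assert (HA : M*M / d + 1 <= A) by (unfold A; nra).
    apply Rle_trans with (M*M / A).
    + apply Rmult_le_compat_l; [nra|apply Rinv_le_contravar; nra].
    + apply (Rmult_le_reg_r A); [lra|].
      replace (M*M / A * A) with (M*M) by (field; lra).
      replace (M*M) with (M*M / d * d) at 1 by (field; lra); nra.
Qed.

Lemma kernel_freq_le T : 2 * PI / (g * sqrt (1 - eps)) < T ->
  0 < T /\ 2 * (PI / T) <= gap_rate g eps.
Proof.
  intros HT; pose proof PI_RGT_0.
  assert (Hs : 0 < sqrt (1 - eps)) by (apply sqrt_lt_R0; lra).
  assert (Hs2 : sqrt (1 - eps) * sqrt (1 - eps) = 1 - eps) by (apply sqrt_sqrt; lra).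
  assert (Hs1 : sqrt (1 - eps) <= 1 - eps/4) by nra.
  assert (Hq : 0 < 2 * PI / (g * sqrt (1 - eps))) by (apply Rdiv_lt_0_compat; nra).
  assert (HT0 : 0 < T) by lra; split; [exact HT0|].
  apply (Rmult_lt_compat_r (g * sqrt (1 - eps))) in HT; [|nra].
  replace (2 * PI / (g * sqrt (1 - eps)) * (g * sqrt (1 - eps))) with (2 * PI) in HT
    by (field; lra).
  unfold gap_rate; apply (Rmult_le_reg_r T); [exact HT0|].
  replace (2 * (PI / T) * T) with (2 * PI) by (field; lra); nra.
Qed.

End Margins.

Lemma rhs_coef_eq (w : nat -> Cx) T g eps j : 0 < T -> 0 < g ->
  2 * PI * T * rhs_coef w T g eps j
  = (1 - eps) * diag_weight (fun n => Im (w n)) (PI / T) T j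
    - 2 * (PI / T) * (4 * (1 + eps) / (g*g)) * damp_factor (fun n => Im (w n)) T j.
Proof.
  intros HT Hg; pose proof PI_RGT_0.
  unfold rhs_coef, diag_weight, damp_factor.
  replace (- 2 * Im (w j) * T) with (-((Im (w j) + Im (w j)) * T)) by ring.
  field; repeat split; try lra; nra.
Qed.

Lemma rhs_coef_bound (w : nat -> Cx) T g eps B j : 0 < T -> 0 < g -> 0 < eps < 1 ->
  Rabs (Im (w j)) <= B ->
  Rabs (rhs_coef w T g eps j) <= (1 / PI^2 + 8 / (T^2 * g^2)) * (1 + exp (2 * B * T)).
Proof.
  intros HT Hg Heps HB; pose proof PI_RGT_0; unfold rhs_coef.
  assert (HP2 : 0 < PI^2) by (apply pow_lt; lra).
  assert (HTg : 0 < T^2 * g^2) by (apply Rmult_lt_0_compat; apply pow_lt; lra).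
  set (al := (1 - eps) / (PI^2 + 4 * T^2 * Im (w j) ^ 2)).
  set (be := 4 * (1 + eps) / (T^2 * g^2)).
  set (ex := 1 + exp (- 2 * Im (w j) * T)).
  assert (0 <= T^2 * Im (w j) ^ 2) by (apply Rmult_le_pos; apply pow2_ge_0).
  assert (Hal : 0 <= al <= 1 / PI^2).
  { unfold al, Rdiv; split; [apply Rmult_le_pos; [lra|left; apply Rinv_0_lt_compat; lra]|].
    apply Rmult_le_compat; [lra|left; apply Rinv_0_lt_compat; lra|lra|].
    apply Rinv_le_contravar; lra. }
  assert (Hbe : 0 <= be <= 8 / (T^2 * g^2)).
  { unfold be, Rdiv; split; [apply Rmult_le_pos; [lra|left; apply Rinv_0_lt_compat; lra]|].
    apply Rmult_le_compat_r; [left; apply Rinv_0_lt_compat|]; lra. }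
  assert (Hex : 0 < ex <= 1 + exp (2 * B * T)).
  { unfold ex; pose proof (exp_pos (- 2 * Im (w j) * T)); split; [lra|].
    apply Rplus_le_compat_l; apply Rabs_le_between in HB.
    assert (Hle : - 2 * Im (w j) * T <= 2 * B * T) by nra.
    destruct (Rle_lt_or_eq_dec _ _ Hle) as [Hlt| ->]; [left; apply exp_increasing, Hlt|lra]. }
  rewrite Rabs_mult, (Rabs_pos_eq ex) by lra.
  apply Rmult_le_compat; [apply Rabs_pos|lra| |lra].
  apply Rabs_le; lra.
Qed.

Section Main.
Variables (w c Cc : nat -> Cx) (M g eps B T : R) (n0 : nat).
Hypotheses (Hg : 0 < g) (Heps : 0 < eps < 1)
  (HB : forall n, (n0 <= n)%nat -> Rabs (Im (w n)) <= B)
  (Hc : forall n, (n0 <= n)%nat -> Cmod (c n) <= M / Cmod (w n))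
  (Hstep : forall n, (n0 <= n)%nat -> gap_rate g eps <= Re (w (S n)) - Re (w n))
  (Ha0 : start_level M g eps B <= Re (w n0))
  (HT : 2 * PI / (g * sqrt (1 - eps)) < T)
  (HCc : small_tails (fun n => Cmod2 (Cc n))).

Local Notation a := (fun n => Re (w n)).
Local Notation b := (fun n => Im (w n)).
Local Notation nu := (PI / T).
Local Notation gam := (gap_rate g eps).
Local Notation A := (start_level M g eps B).
Local Notation mu := (M*M / (start_level M g eps B * start_level M g eps B)).
Local Notation W := (row_bound (gap_rate g eps) (start_level M g eps B)).
Local Notation xC := (fun n => Re (Cc n)).
Local Notation yC := (fun n => Im (Cc n)).
Local Notation xG := (fun n => Re (Cmul (c n) (Cc n))).
Local Notation yG := (fun n => Im (Cmul (c n) (Cc n))).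

Let HT0 : 0 < T := proj1 (kernel_freq_le g eps Hg Heps T HT).
Let Hnugam : 2 * nu <= gam := proj2 (kernel_freq_le g eps Hg Heps T HT).
Let HnuT : nu * T = PI.
Proof. field; lra. Qed.
Let Hnu : 0 < nu.
Proof. apply Rdiv_lt_0_compat; [apply PI_RGT_0|exact HT0]. Qed.
Let Hgam : 0 < gam := gap_rate_pos g eps Hg Heps.
Let HA : 2 * gam <= A := proj1 (start_level_spec M g eps B Hg Heps).

Lemma Re_w_ge j : (n0 <= j)%nat -> A <= Re (w j).
Proof. apply (gap_lower_A a gam A n0 Hgam Hstep Ha0). Qed.

Lemma coupling_dominated j : (n0 <= j)%nat -> sqnorm xG yG j <= mu * sqnorm xC yC j.
Proof.
  intros Hj; change (Cmod2 (Cmul (c j) (Cc j)) <= mu * Cmod2 (Cc j)).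
  rewrite Cmod2_Cmul; apply Rmult_le_compat_r; [apply (sqnorm_nonneg xC yC j)|].
  apply (Cmod2_le_of_Cmod_le _ (w j)); [lra|apply Re_w_ge, Hj|apply Hc, Hj].
Qed.

Lemma rhs_coef_le j : (n0 <= j)%nat ->
  2 * PI * T * rhs_coef w T g eps j
  <= diag_weight b nu T j - 2 * nu * W * damp_factor b T j
     - 2 * mu * (diag_weight b nu T j + 2 * nu * W * damp_factor b T j).
Proof.
  intros Hj; rewrite rhs_coef_eq by assumption.
  destruct (margin_spec g eps B Hg Heps) as (Hd & Hd4 & Hd1 & HdK).
  pose proof (proj2 (start_level_spec M g eps B Hg Heps)) as [Hrow Hmu].
  pose proof (inv_gap_rate_sqr_le g eps Hg Heps) as Hinv.
  pose proof (row_bound_pos gam A Hgam HA) as HW.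
  pose proof (damp_factor_pos b T j) as Hu.
  assert (Hmu0 : 0 <= mu) by (apply Rmult_le_pos; [nra|left; apply Rinv_0_lt_compat; nra]).
  apply (weight_margin _ _ _ _ _ (weight_cap g) _ _ (g*g + 4*B*B) (margin g eps B));
    try assumption; try lra.
  - nra.
  - unfold diag_weight.
    specialize (HB j Hj); apply Rabs_le_between in HB.
    set (D := nu * nu + (b j + b j) * (b j + b j)).
    assert (HD : 0 < D) by (unfold D; nra).
    assert (Hng : 2 * nu <= g * (1 - eps/4)) by exact Hnugam.
    assert (0 < g * eps) by nra.
    assert (nu <= g) by lra.
    assert (nu * nu <= g * g) by nra.
    assert (D <= g*g + 4*B*B) by (unfold D; nra).
    apply (Rmult_le_reg_r D); [exact HD|].
    replace ((g*g + 4*B*B) * (2 * nu * damp_factor b T j / D) * D)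
      with ((g*g + 4*B*B) * (2 * nu * damp_factor b T j)) by (field; lra).
    assert (0 < 2 * nu * damp_factor b T j) by nra; nra.
  - unfold row_bound; lra.
  - assert (4 * (1 + eps) / (g*g) <= 8 / (g*g))
      by (unfold Rdiv; apply Rmult_le_compat_r; [left; apply Rinv_0_lt_compat; nra|lra]).
    unfold row_bound, weight_cap; lra.
Qed.

Local Notation energy_C := (energy a b xC yC nu T n0).
Local Notation energy_G := (energy a b xG yG nu T n0).

Lemma energy_limits : exists LC LG, Un_cv energy_C LC /\ Un_cv energy_G LG.
Proof.
  assert (HG : small_tails (sqnorm xG yG)).
  { apply (small_tails_dominated (sqnorm xC yC) _ n0 mu); [|exact coupling_dominated|exact HCc].
    apply Rmult_le_pos; [nra|left; apply Rinv_0_lt_compat; nra]. }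
  destruct (R_complete _ (energy_Cauchy a b nu T gam A B n0 HT0 HnuT Hnu Hgam Hnugam HA Hstep Ha0 HB
                            xC yC HCc)) as [LC HLC].
  destruct (R_complete _ (energy_Cauchy a b nu T gam A B n0 HT0 HnuT Hnu Hgam Hnugam HA Hstep Ha0 HB
                            xG yG HG)) as [LG HLG].
  exists LC, LG; split; assumption.
Qed.

Lemma rhs_series_converges :
  exists s, infinite_sum (fun j => rhs_coef w T g eps (n0 + j) * Cmod2 (Cc (n0 + j))) s.
Proof.
  assert (Hf : forall j, (n0 <= j)%nat -> Rabs (rhs_coef w T g eps j * Cmod2 (Cc j))
      <= (1 / PI^2 + 8 / (T^2 * g^2)) * (1 + exp (2 * B * T)) * Cmod2 (Cc j)).
  { intros j Hj; pose proof (sqnorm_nonneg xC yC j).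
    rewrite Rabs_mult, (Rabs_pos_eq (Cmod2 (Cc j))) by assumption.
    apply Rmult_le_compat_r; [assumption|apply rhs_coef_bound; auto]. }
  destruct (R_complete _ (series_Cauchy_of_small_tails _ n0
    (fun j _ => sqnorm_nonneg xC yC j) HCc _ _ Hf)) as [s Hs].
  exists s; exact Hs.
Qed.

Lemma rhs_partial_sum_le m :
  2 * PI * T * sum_f_R0 (fun j => rhs_coef w T g eps (n0 + j) * Cmod2 (Cc (n0 + j))) m
  <= energy_C (S m) - 2 * energy_G (S m).
Proof.
  rewrite (sum_f_R0_rsum (fun j => rhs_coef w T g eps j * Cmod2 (Cc j))), <- rsum_scal.
  eapply Rle_trans; [|apply (energy_difference_ge a b nu T gam A n0 Hnu Hgam Hnugam HA Hstep Ha0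
                              xC yC xG yG mu
                              (fun j => 2 * PI * T * rhs_coef w T g eps j))].
  - right; apply rsum_ext; intros; unfold sqnorm, Cmod2; ring.
  - apply Rmult_le_pos; [nra|left; apply Rinv_0_lt_compat; nra].
  - exact coupling_dominated.
  - exact rhs_coef_le.
Qed.

Lemma lemma5p6_fixed_T : exists (v : nat -> R) (L s : R),
  (forall m, IsRInt (integrand w c Cc T n0 m) 0 T (v m)) /\
  Un_cv v L /\
  infinite_sum (fun j => rhs_coef w T g eps (n0 + j)%nat * Cmod2 (Cc (n0 + j)%nat)) s /\
  2 * PI * T * s <= L.
Proof.
  destruct energy_limits as (LC & LG & HLC & HLG).
  destruct rhs_series_converges as [s Hs].
  exists (fun m => energy_C m - 2 * energy_G m), (LC - 2 * LG), s.
  assert (Hv : Un_cv (fun m => energy_C m - 2 * energy_G m) (LC - 2 * LG))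
    by (apply CV_minus; [|apply Un_cv_scal]; assumption).
  split; [|split; [exact Hv|split; [exact Hs|]]].
  - intros m; apply IsRInt_of_is_RInt, is_RInt_integrand; [exact HT0| |];
      apply (is_RInt_energy_gap a b nu T gam A n0 HnuT Hnu Hgam Hnugam HA Hstep Ha0); lia.
  - eapply Rle_cv_lim; [intros n; apply rhs_partial_sum_le|apply Un_cv_scal, Hs|].
    apply (CV_shift' _ 1) in Hv.
    eapply Un_cv_ext; [|exact Hv]; intros n; cbv beta; rewrite Nat.add_1_r; reflexivity.
Qed.

End Main.

Theorem lemma5p6 (w c : nat -> Cx) (M g : R)
  (hw0 : forall n, (1 <= n)%nat -> w n <> C0)
  (hgap : is_liminf (fun n => Re (w (S n)) - Re (w n)) g)
  (hg : 0 < g)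
  (hIm : exists B, forall n, (1 <= n)%nat -> Rabs (Im (w n)) <= B)
  (hM : 0 < M)
  (hc : forall n, (1 <= n)%nat -> Cmod (c n) <= M / Cmod (w n)) :
  forall eps, 0 < eps < 1 ->
  exists n0 : nat, (1 <= n0)%nat /\
  forall T, 2 * PI / (g * sqrt (1 - eps)) < T ->
  forall Cc : nat -> Cx,
    (exists l, infinite_sum (fun n => Cmod2 (Cc (S n))) l) ->
    exists (v : nat -> R) (L s : R),
      (forall m, IsRInt (integrand w c Cc T n0 m) 0 T (v m)) /\
      Un_cv v L /\
      infinite_sum (fun j => rhs_coef w T g eps (n0 + j)%nat * Cmod2 (Cc (n0 + j)%nat)) s /\
      2 * PI * T * s <= L.
Proof.
  intros eps Heps; destruct hIm as [B HB].
  destruct (proj1 (hgap (g * eps / 4) ltac:(nra))) as [N HN].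
  assert (Hstep : forall n, (Nat.max N 1 <= n)%nat ->
                    gap_rate g eps <= Re (w (S n)) - Re (w n))
    by (intros n Hn; specialize (HN n ltac:(lia)); unfold gap_rate; lra).
  destruct (gap_reaches _ _ _ (start_level M g eps B) (gap_rate_pos g eps hg Heps) Hstep)
    as (n0 & Hn0 & Ha0).
  exists n0; split; [lia|]; intros T HT Cc [l Hl].
  apply (lemma5p6_fixed_T w c Cc M g eps B T n0); auto.
  - intros; apply HB; lia.
  - intros; apply hc; lia.
  - intros; apply Hstep; lia.
  - exact (small_tails_of_series _ l Hl).
Qed.
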